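(* Let $\phi_\tau$ and $\psi_\tau$ be the flows of $x'=x-x^2$ and $x'=x^2-x$ respectively (the reduced Milne-state equation $\Omega'=\mu\Omega(\Omega-1)$ for $\mu=-1$ and $\mu=+1$). Then $$\phi_\tau(x)=\frac{xe^\tau}{xe^\tau-x+1},\qquad \psi_\tau(x)=\frac{x}{x-xe^\tau+e^\tau},$$ and for every state $x\in(0,1)$ the function $\tau\mapsto\phi_\tau(x)-\psi_\tau(x)$ is strictly increasing. Consequently the sync function $\omega=|\phi_\tau(x)-\psi_\tau(x)|$ does not tend to $0$ as $\tau\to+\infty$, so a Friedmann domain governed by the reduced equation $\Omega'=-\mu\Omega+\mu\Omega^2$ (with $\mu$ ranging over values on both sides of $0$) is not dynamically synchronized in the future.
   Context: $\Omega$ is the density parameter of a Friedmann universe with perfect fluid, $\mu=3\gamma-2$ the fluid parameter treated as varying, $\tau$ the dimensionless time. For a reduced system $\Omega'=F(\Omega,\mu)$ with flow $\phi_\tau(\Omega,\mu)$, the sync function is $\omega=|\phi_\tau(\Omega_+,\mu_+)-\phi_\tau(\Omega_-,\mu_-)|$ for pairs of states $\Omega_\pm$ and parameter values $\mu_\pm$; the domain is dynamically synchronized in the future if $\omega\to0$ as $\tau\to+\infty$ for all $\mu\in\mathbb{R}$, $\Omega>0$, and it desynchronizes if for some pair of parameter values and/or states this limit fails to exist or is nonzero. *)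

From Stdlib Require Import Reals.
From Coquelicot Require Import Coquelicot.
Open Scope R_scope.

(* Closed forms of the flows of x' = x - x^2 (phi) and x' = x^2 - x (psi). *)
Definition phi (t x : R) : R := x * exp t / (x * exp t - x + 1).
Definition psi (t x : R) : R := x / (x - x * exp t + exp t).

Definition is_solution (F : R -> R) (x : R) (u : R -> R) : Prop :=
  u 0 = x /\ forall t : R, is_derive u t (F (u t)).

Definition sync (x t : R) : R := Rabs (phi t x - psi t x).

(** Uniqueness is a
    Grönwall argument: the difference [w] of two solutions of [u' = F u]
    satisfies [w' = a w] with [a] continuous, and if [|a| <= M] on [[0, t]]
    then [w^2 e^(-2 M s)] is nonincreasing there, so [w] stays [0]; negative
    times reduce to this by reversing time.  Finally [phi_t x] increases and
    [psi_t x] decreases in [t] (cross-multiplying, the gaps are multiples of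
    [x (1 - x) (e^t2 - e^t1) > 0]); since both equal [x] at [t = 0], the
    difference stays above its positive value at [t = 1], so its modulus
    cannot tend to [0]. *)

From Stdlib Require Import Reals Lra.
From Coquelicot Require Import Coquelicot.
Open Scope R_scope.

Lemma is_derive_continuous (f df : R -> R) :
  (forall t, is_derive f t (df t)) -> forall t, continuous f t.
Proof.
  intros Hf t. apply (ex_derive_continuous (K := R_AbsRing) (V := R_NormedModule)).
  exists (df t). exact (Hf t).
Qed.

Section LinearODE.

Variables (a w : R -> R).
Hypothesis w_derive : forall t, is_derive w t (a t * w t).
Hypothesis a_continuous : forall t, continuous a t.
Hypothesis w0 : w 0 = 0.

Lemma is_derive_sqr_exp (K s : R) :
  is_derive (fun r => w r * w r * exp (K * r)) s
    (w s * w s * exp (K * s) * (2 * a s + K)).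
Proof.
  assert (Hexp : is_derive (fun r => exp (K * r)) s (K * exp (K * s))).
  { auto_derive; [easy | ring]. }
  assert (Hsqr := is_derive_mult _ _ _ _ _ (w_derive s) (w_derive s) Rmult_comm).
  assert (H := is_derive_mult _ _ _ _ _ Hsqr Hexp Rmult_comm).
  unfold mult, plus in H; simpl in H.
  eapply is_derive_ext; [intros; reflexivity |].
  replace (w s * w s * exp (K * s) * (2 * a s + K))
    with ((a s * w s * w s + w s * (a s * w s)) * exp (K * s)
          + w s * w s * (K * exp (K * s))) by ring.
  exact H.
Qed.

Lemma linear_ode_zero_forward (t : R) : 0 <= t -> w t = 0.
Proof.
  intros Ht.
  destruct (continuity_ab_maj (fun r => Rabs (a r)) 0 t Ht) as [m [Hm _]].
  { intros c _. apply continuity_pt_filterlim.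
    apply (continuous_comp a Rabs); [apply a_continuous | apply continuous_Rabs]. }
  set (K := - (2 * Rabs (a m))).
  destruct (MVT_gen (fun r => w r * w r * exp (K * r)) 0 t
              (fun s => w s * w s * exp (K * s) * (2 * a s + K)))
    as [c [Hc Hmvt]].
  - intros s _. apply is_derive_sqr_exp.
  - intros s _. apply continuity_pt_filterlim.
    exact (is_derive_continuous _ _ (is_derive_sqr_exp K) s).
  - rewrite Rmin_left, Rmax_right in Hc by lra.
    rewrite w0 in Hmvt.
    assert (Hslope : 2 * a c + K <= 0).
    { pose proof (Hm c Hc) as Hac. apply Rabs_le_between in Hac. unfold K. lra. }
    assert (Hgc : 0 <= w c * w c * exp (K * c)).
    { pose proof (exp_pos (K * c)). nra. }
    assert (Hgt : w t * w t * exp (K * t) <= 0).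
    { assert (w c * w c * exp (K * c) * (2 * a c + K) <= 0) by nra.
      assert (w c * w c * exp (K * c) * (2 * a c + K) * (t - 0) <= 0) by nra.
      lra. }
    assert (Hsqr : w t * w t <= 0).
    { apply (Rmult_le_reg_r (exp (K * t))); [apply exp_pos | lra]. }
    nra.
Qed.

End LinearODE.

Lemma linear_ode_zero (a w : R -> R) :
  (forall t, is_derive w t (a t * w t)) -> (forall t, continuous a t) ->
  w 0 = 0 -> forall t, w t = 0.
Proof.
  intros Hw Ha H0 t.
  destruct (Rle_dec 0 t) as [Ht | Ht].
  - exact (linear_ode_zero_forward a w Hw Ha H0 t Ht).
  - replace t with (- - t) by ring.
    apply (linear_ode_zero_forward (fun r => - a (- r)) (fun r => w (- r))).
    + intros s.
      assert (Hopp : is_derive (fun r : R => - r) s (-1)).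
      { auto_derive; [easy | ring]. }
      pose proof (is_derive_comp w (fun r => - r) s _ _ (Hw (- s)) Hopp) as H.
      unfold scal in H; simpl in H; unfold mult in H; simpl in H.
      replace (- a (- s) * w (- s)) with (-1 * (a (- s) * w (- s))) by ring.
      exact H.
    + intros s. apply (continuous_opp (fun r => a (- r))).
      apply (continuous_comp (fun r : R => - r) a); [| apply Ha].
      apply (continuous_opp (fun r : R => r)), continuous_id.
    + now rewrite Ropp_0.
    + lra.
Qed.

Lemma is_solution_continuous (F : R -> R) (x : R) (u : R -> R) :
  is_solution F x u -> forall t, continuous u t.
Proof. intros [_ Hu]. exact (is_derive_continuous u _ Hu). Qed.

Lemma is_solution_unique (F : R -> R) (G : R -> R -> R) (x : R) (u v : R -> R) :
  (forall y z, F y - F z = G y z * (y - z)) ->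
  is_solution F x u -> is_solution F x v ->
  (forall t, continuous (fun s => G (u s) (v s)) t) ->
  forall t, u t = v t.
Proof.
  intros HG [Hu0 Hu] [Hv0 Hv] HGc t.
  apply Rminus_diag_uniq.
  apply (linear_ode_zero (fun s => G (u s) (v s)) (fun s => u s - v s)).
  - intros s. rewrite <- HG. exact (is_derive_minus _ _ _ _ _ (Hu s) (Hv s)).
  - exact HGc.
  - now rewrite Hu0, Hv0, Rminus_diag.
Qed.

Lemma Rdiv_lt_cross (a b c d : R) :
  0 < b -> 0 < d -> a * d < c * b -> a / b < c / d.
Proof.
  intros Hb Hd H. apply Rlt_0_minus.
  replace (c / d - a / b) with ((c * b - a * d) / (b * d)) by (field; lra).
  apply Rdiv_lt_0_compat; nra.
Qed.

Section Flows.

Variable x : R.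
Hypothesis x_in01 : 0 < x < 1.

Lemma phi_denom_pos (t : R) : 0 < x * exp t - x + 1.
Proof. pose proof (exp_pos t). nra. Qed.

Lemma psi_denom_pos (t : R) : 0 < x - x * exp t + exp t.
Proof. pose proof (exp_pos t). nra. Qed.

Lemma phi_0 : phi 0 x = x.
Proof. unfold phi. rewrite exp_0. field; lra. Qed.

Lemma psi_0 : psi 0 x = x.
Proof. unfold psi. rewrite exp_0. field; lra. Qed.

Lemma phi_is_solution : is_solution (fun y => y - y ^ 2) x (fun t => phi t x).
Proof.
  split; [exact phi_0 |]. intros t.
  pose proof (phi_denom_pos t). unfold phi.
  auto_derive; [lra |]. field. lra.
Qed.

Lemma psi_is_solution : is_solution (fun y => y ^ 2 - y) x (fun t => psi t x).
Proof.
  split; [exact psi_0 |]. intros t.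
  pose proof (psi_denom_pos t). unfold psi.
  auto_derive; [lra |]. field. lra.
Qed.

Lemma phi_unique (u : R -> R) :
  is_solution (fun y => y - y ^ 2) x u -> forall t, u t = phi t x.
Proof.
  intros Hu.
  apply (is_solution_unique (fun y => y - y ^ 2) (fun y z => 1 - y - z) x u (fun t => phi t x)); [intros; ring | exact Hu | exact phi_is_solution |].
  intros s. apply (continuous_minus (fun r => 1 - u r) (fun r => phi r x)).
  - apply (continuous_minus (fun _ => 1) u);
      [apply continuous_const | exact (is_solution_continuous _ _ _ Hu s)].
  - exact (is_solution_continuous _ _ _ phi_is_solution s).
Qed.

Lemma psi_unique (u : R -> R) :
  is_solution (fun y => y ^ 2 - y) x u -> forall t, u t = psi t x.
Proof.
  intros Hu.
  apply (is_solution_unique (fun y => y ^ 2 - y) (fun y z => y + z - 1) x u (fun t => psi t x)); [intros; ring | exact Hu | exact psi_is_solution |].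
  intros s. apply (continuous_minus (fun r => u r + psi r x) (fun _ => 1)).
  - apply (continuous_plus u (fun r => psi r x)).
    + exact (is_solution_continuous _ _ _ Hu s).
    + exact (is_solution_continuous _ _ _ psi_is_solution s).
  - apply continuous_const.
Qed.

Lemma phi_psi_increasing (t1 t2 : R) :
  t1 < t2 -> phi t1 x - psi t1 x < phi t2 x - psi t2 x.
Proof.
  intros Ht.
  pose proof (exp_increasing _ _ Ht). pose proof (exp_pos t1).
  assert (Hgap : 0 < x * (1 - x) * (exp t2 - exp t1)).
  { apply Rmult_lt_0_compat; nra. }
  assert (phi t1 x < phi t2 x).
  { apply Rdiv_lt_cross; [apply phi_denom_pos .. | nra]. }
  assert (psi t2 x < psi t1 x).
  { apply Rdiv_lt_cross; [apply psi_denom_pos .. | nra]. }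
  lra.
Qed.

End Flows.

Lemma increasing_not_lim_abs_0 (f : R -> R) (t0 : R) :
  (forall t1 t2, t1 < t2 -> f t1 < f t2) -> 0 <= f t0 ->
  ~ is_lim (fun t => Rabs (f t)) p_infty 0.
Proof.
  intros Hf H0 Hlim. apply is_lim_spec in Hlim.
  assert (Hpos : 0 < f (t0 + 1)) by (pose proof (Hf t0 (t0 + 1)); lra).
  destruct (Hlim (mkposreal _ Hpos)) as [M HM]; simpl in HM.
  set (t := Rmax M (t0 + 1) + 1).
  assert (HMt : M < t) by (pose proof (Rmax_l M (t0 + 1)); unfold t; lra).
  assert (Ht : t0 + 1 < t) by (pose proof (Rmax_r M (t0 + 1)); unfold t; lra).
  pose proof (HM t HMt) as Hclose. pose proof (Hf _ _ Ht).
  rewrite Rminus_0_r, Rabs_Rabsolu, Rabs_right in Hclose by lra.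
  lra.
Qed.

Theorem mainTheorem8 :
  (* phi_tau is the flow of x' = x - x^2 *)
  (forall x : R, 0 < x < 1 ->
     is_solution (fun y => y - y ^ 2) x (fun t => phi t x)) /\
  (forall x : R, 0 < x < 1 ->
     forall u : R -> R, is_solution (fun y => y - y ^ 2) x u ->
     forall t : R, u t = phi t x) /\
  (* psi_tau is the flow of x' = x^2 - x *)
  (forall x : R, 0 < x < 1 ->
     is_solution (fun y => y ^ 2 - y) x (fun t => psi t x)) /\
  (forall x : R, 0 < x < 1 ->
     forall u : R -> R, is_solution (fun y => y ^ 2 - y) x u ->
     forall t : R, u t = psi t x) /\
  (* tau |-> phi_tau(x) - psi_tau(x) is strictly increasing *)
  (forall x : R, 0 < x < 1 ->
     forall t1 t2 : R, t1 < t2 ->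
       phi t1 x - psi t1 x < phi t2 x - psi t2 x) /\
  (* the sync function does not tend to 0 as tau -> +oo *)
  (forall x : R, 0 < x < 1 ->
     ~ is_lim (sync x) p_infty 0).
Proof.
  split; [exact phi_is_solution |].
  split; [exact phi_unique |].
  split; [exact psi_is_solution |].
  split; [exact psi_unique |].
  split; [exact phi_psi_increasing |].
  intros x Hx.
  apply (increasing_not_lim_abs_0 (fun t => phi t x - psi t x) 0).
  - exact (phi_psi_increasing x Hx).
  - rewrite (phi_0 x), (psi_0 x). lra.
Qed.
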